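(* If $T\in\mathscr{E}(X)$ and $\xi$ is a coarse filter on $X$, then $\inf_{F\in\xi}\|\mathbf{1}_FT\|=\inf_{F\in\xi}\|T\mathbf{1}_F\|$, both infima being taken over measurable $F\in\xi$.
   Context: $(X,d)$ is a non-compact proper metric space, $B_x(r)=\{y:d(x,y)\le r\}$, and $\mu$ is a Radon measure with support $X$ such that $\mu(B_x(r))>0$ and $\sup_x\mu(B_x(r))<\infty$ for all $r>0$. On $L^2(X,\mu)$, $\mathbf{1}_A$ is multiplication by the characteristic function of measurable $A$. A kernel $k$ on $X\times X$ is controlled if $k(x,y)=0$ whenever $d(x,y)>r$ for some $r$; $\mathscr{E}(X)$ is the norm closure of the operators $(Op(k)f)(x)=\int k(x,y)f(y)d\mu(y)$, $k$ bounded, uniformly continuous and controlled. A filter is a nonempty family of subsets, not containing $\emptyset$, stable under finite intersections and supersets. With $F^{(r)}=\{x:\inf_{y\notin F}d(x,y)>r\}$, a filter $\xi$ is coarse if $F\in\xi\Rightarrow F^{(r)}\in\xi$ for all $r>0$. *)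

From HB Require Import structures.
From mathcomp Require Import all_boot all_order all_algebra.
From mathcomp Require Import all_classical all_reals all_analysis.
From mathcomp Require Import complex.

Set Implicit Arguments.
Unset Strict Implicit.
Unset Printing Implicit Defensive.

Import Order.TTheory GRing.Theory Num.Theory.
Import numFieldNormedType.Exports.

Local Open Scope classical_set_scope.
Local Open Scope ring_scope.

Section RoeDefs.
Context {R : realType} {d : measure_display} {X : measurableType d}.
Variable dist : X -> X -> R.

Definition is_metric : Prop :=
  [/\ (forall x y, 0 <= dist x y),
      (forall x y, dist x y = 0 <-> x = y),
      (forall x y, dist x y = dist y x) &
      (forall x y z, dist x z <= dist x y + dist y z)].

Definition cball (x : X) (r : R) : set X := [set y | dist x y <= r].

Definition dopen (U : set X) : Prop :=
  forall x, U x -> exists2 r : R, 0 < r & [set y | dist x y < r] `<=` U.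

Definition dcompact (A : set X) : Prop :=
  forall G : set (set X), G `<=` dopen -> A `<=` \bigcup_(U in G) U ->
    exists (n : nat) (V : nat -> set X),
      (forall i, (i < n)%N -> G (V i)) /\ A `<=` \bigcup_(i in [set i | (i < n)%N]) V i.

Definition proper_space : Prop := forall x r, dcompact (cball x r).

Definition borel_structure : Prop := (@measurable d X) = <<s dopen >>.

Definition radon (mu : {measure set X -> \bar R}) : Prop :=
  [/\ (forall x, exists U, [/\ dopen U, U x & (mu U < +oo)%E]),
      (forall A, measurable A ->
         mu A = ereal_inf [set mu U | U in [set U | dopen U /\ A `<=` U]]) &
      (forall U, dopen U ->
         mu U = ereal_sup [set mu K | K in [set K | [/\ dcompact K, measurable K & K `<=` U]]])].

(** supp mu = X : every nonempty open set has positive measure *)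
Definition full_support (mu : {measure set X -> \bar R}) : Prop :=
  forall U, dopen U -> U !=set0 -> (0 < mu U)%E.

Definition cabs (z : R[i]) : R := Num.sqrt (complex.Re z ^+ 2 + complex.Im z ^+ 2).

Definition cmeasurable (f : X -> R[i]) : Prop :=
  measurable_fun setT (fun x => complex.Re (f x)) /\ measurable_fun setT (fun x => complex.Im (f x)).

Definition L2norm (mu : {measure set X -> \bar R}) (f : X -> R[i]) : \bar R :=
  Lnorm mu 2%:E (fun x => (cabs (f x))%:E).

Definition inL2 (mu : {measure set X -> \bar R}) (f : X -> R[i]) : Prop :=
  cmeasurable f /\ (L2norm mu f < +oo)%E.

(** operator norm on L^2(X,mu) of a map acting on (representatives of) L^2 functions *)
Definition opnorm (mu : {measure set X -> \bar R})
    (S : (X -> R[i]) -> (X -> R[i])) : \bar R :=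
  ereal_sup [set L2norm mu (S f) | f in [set f | inL2 mu f /\ (L2norm mu f <= 1)%E]].

Definition cintegral (mu : {measure set X -> \bar R}) (g : X -> R[i]) : R[i] :=
  Complex (Rintegral mu setT (fun y => complex.Re (g y))) (Rintegral mu setT (fun y => complex.Im (g y))).

Definition Op (mu : {measure set X -> \bar R}) (k : X -> X -> R[i])
    (f : X -> R[i]) : X -> R[i] :=
  fun x => cintegral mu (fun y => k x y * f y).

Definition good_kernel (k : X -> X -> R[i]) : Prop :=
  [/\ (exists M : R, forall x y, cabs (k x y) <= M),
      (forall e : R, 0 < e -> exists2 del : R, 0 < del &
         forall x y x' y', dist x x' < del -> dist y y' < del ->
           cabs (k x y - k x' y') < e) &
      (exists r : R, forall x y, r < dist x y -> k x y = 0)].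

Definition in_EX (mu : {measure set X -> \bar R})
    (T : (X -> R[i]) -> (X -> R[i])) : Prop :=
  (forall f, inL2 mu f -> inL2 mu (T f)) /\
  (forall e : R, 0 < e -> exists k, good_kernel k /\
     (opnorm mu (fun f x => (T f x - Op mu k f x)%R) <= e%:E)%E).

Definition mulind (A : set X) (f : X -> R[i]) : X -> R[i] :=
  fun x => Complex (\1_A x) 0 * f x.

Definition is_filter (xi : set (set X)) : Prop :=
  [/\ xi !=set0, ~ xi set0,
      (forall F G, xi F -> xi G -> xi (F `&` G)) &
      (forall F G, xi F -> F `<=` G -> xi G)].

(** F^(r) = { x | inf_{y notin F} d(x,y) > r }  (inf of the empty set = +oo) *)
Definition r_interior (F : set X) (r : R) : set X :=
  [set x | (r%:E < ereal_inf [set (dist x y)%:E | y in ~` F])%E].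

Definition coarse_filter (xi : set (set X)) : Prop :=
  is_filter xi /\ (forall F (r : R), xi F -> 0 < r -> xi (r_interior F r)).

End RoeDefs.

From HB Require Import structures.
From mathcomp Require Import all_boot all_order all_algebra.
From mathcomp Require Import all_classical all_reals all_analysis.
From mathcomp Require Import complex measurable_realfun.
From mathcomp Require Import lra ring.
Set Implicit Arguments.
Unset Strict Implicit.
Unset Printing Implicit Defensive.

Import Order.TTheory GRing.Theory Num.Theory.
Import numFieldNormedType.Exports.
Local Open Scope classical_set_scope.
Local Open Scope ring_scope.

(* Approximate T within e/2 by Op(k) with k(x,y) = 0 once d(x,y) > r, and for
   F in xi put G = F^(r), again in xi.  As k(x,y) = 0 for x in G and y outside
   F, the operators 1_G Op(k) and 1_G Op(k) 1_F agree, whence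
   ||1_G T|| <= ||T 1_F|| + e; likewise 1_(X\F) Op(k) 1_G = 0, whence
   ||T 1_G|| <= ||1_F T|| + e.  Both infima are thus dominated by each other.
   The analytic work is the measurability of Op(k) f: it is even continuous,
   by domination of the integrand by 1_(B_x(r+1)) + |f|^2, which is integrable
   because ball measures are uniformly bounded. *)

Section ComplexModulus.
Local Open Scope complex_scope.
Context {R : realType}.
Implicit Types z w v : R[i].

Lemma cabs_normc z : `|z| = (cabs z)%:C.
Proof. by rewrite normc_def. Qed.

Lemma cabs_ge0 z : 0 <= cabs z.
Proof. exact: sqrtr_ge0. Qed.

Lemma ler_cabsD z w : cabs (z + w) <= cabs z + cabs w.
Proof. by have := ler_normD z w; rewrite !cabs_normc -rmorphD lecR. Qed.

Lemma cabsM z w : cabs (z * w) = cabs z * cabs w.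
Proof. by have := normrM z w; rewrite !cabs_normc -rmorphM => -[]. Qed.

Lemma cabsN z : cabs (- z) = cabs z.
Proof. by have := normrN z; rewrite !cabs_normc => -[]. Qed.

Lemma cabs0 : cabs (0 : R[i]) = 0.
Proof. by have := @normr0 _ (R[i]); rewrite !cabs_normc => -[]. Qed.

Lemma ler_cabs_detour z w v : cabs z <= cabs w + cabs (z - v) + cabs (w - v).
Proof.
rewrite {1}(_ : z = w + (z - v) - (w - v)); last by ring.
by rewrite (le_trans (ler_cabsD _ _)) // cabsN lerD2r ler_cabsD.
Qed.

Lemma Re_le_cabs z : `|complex.Re z| <= cabs z.
Proof.
by rewrite /cabs -sqrtr_sqr ler_sqrt ?addr_ge0 ?sqr_ge0 // lerDl sqr_ge0.
Qed.

Lemma Im_le_cabs z : `|complex.Im z| <= cabs z.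
Proof.
by rewrite /cabs -sqrtr_sqr ler_sqrt ?addr_ge0 ?sqr_ge0 // lerDr sqr_ge0.
Qed.

Lemma cabs_real (a : R) : cabs a%:C = `|a|.
Proof. by rewrite /cabs expr0n /= addr0 sqrtr_sqr. Qed.

Lemma ReB z w : complex.Re (z - w) = complex.Re z - complex.Re w.
Proof. by case: z; case: w. Qed.

Lemma ImB z w : complex.Im (z - w) = complex.Im z - complex.Im w.
Proof. by case: z; case: w. Qed.

End ComplexModulus.

Section LnormReal.
Context {d : measure_display} {X : measurableType d} {R : realType}.
Variable mu : {measure set X -> \bar R}.
Local Open Scope ereal_scope.

Lemma LnormE (p : R) (f : X -> R) :
  Lnorm mu p%:E (EFin \o f) = (\int[mu]_x (`|f x| `^ p)%:E) `^ p^-1.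
Proof. by rewrite unlock. Qed.

Lemma le_Lnorm (p : R) (f g : X -> R) : (0 < p)%R ->
  measurable_fun setT f -> measurable_fun setT g ->
  (forall x, `|f x| <= `|g x|)%R ->
  Lnorm mu p%:E (EFin \o f) <= Lnorm mu p%:E (EFin \o g).
Proof.
move=> p0 mf mg fg; rewrite !LnormE.
have mpow (h : X -> R) : measurable_fun setT h ->
    measurable_fun setT (fun x => `|h x| `^ p)%R.
  by move=> mh; apply: (measurableT_comp (measurable_powR p)); exact: measurableT_comp.
apply: gt0_ler_poweR; rewrite ?in_itv /= ?leey ?andbT //.
- by rewrite invr_ge0 ltW.
- by apply: integral_ge0 => x _; rewrite lee_fin powR_ge0.
- by apply: integral_ge0 => x _; rewrite lee_fin powR_ge0.
apply: ge0_le_integral => //; [exact/measurable_EFinP/mpow|exact/measurable_EFinP/mpow|].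
move=> x _; rewrite lee_fin ge0_ler_powR ?nnegrE //; exact: ltW.
Qed.

Lemma le_Lnorm_sum3 (p : R) (h a b c : X -> R) : (1 <= p)%R ->
  measurable_fun setT h -> measurable_fun setT a ->
  measurable_fun setT b -> measurable_fun setT c ->
  (forall x, `|h x| <= `|a x| + `|b x| + `|c x|)%R ->
  Lnorm mu p%:E (EFin \o h) <=
  Lnorm mu p%:E (EFin \o a) + Lnorm mu p%:E (EFin \o b) + Lnorm mu p%:E (EFin \o c).
Proof.
move=> p1 mh ma mb mc hb.
have mabs (f : X -> R) : measurable_fun setT f ->
    measurable_fun setT (fun x => `|f x|)%R.
  exact: measurableT_comp.
have Lnorm_abs (f : X -> R) :
    Lnorm mu p%:E (EFin \o (fun x => `|f x|)%R) = Lnorm mu p%:E (EFin \o f).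
  by rewrite !LnormE; under eq_integral do rewrite /= normr_id.
have mab : measurable_fun setT (fun x => `|a x| + `|b x|)%R.
  by apply: measurable_funD; exact: mabs.
have p0 : (0 < p)%R by apply: lt_le_trans p1.
apply: le_trans (@le_Lnorm p h (fun x => `|a x| + `|b x| + `|c x|)%R p0 mh _ _) _.
- by apply: measurable_funD => //; exact: mabs.
- by move=> x; rewrite (le_trans (hb x)) // ler_norm.
apply: le_trans (minkowski_EFin _ mab (mabs _ mc) p1) _.
rewrite Lnorm_abs leeD2r //.
apply: le_trans (minkowski_EFin _ (mabs _ ma) (mabs _ mb) p1) _.
by rewrite !Lnorm_abs.
Qed.

End LnormReal.

Section IntegrableReal.
Context {d : measure_display} {X : measurableType d} {R : realType}.
Variable mu : {measure set X -> \bar R}.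
Local Notation integrable f := (mu.-integrable setT (EFin \o f)).

Lemma integrableD_EFin (f g : X -> R) :
  integrable f -> integrable g -> integrable (fun y => f y + g y).
Proof.
by move=> hf hg; apply: eq_integrable (integrableD _ hf hg) => // y _; rewrite /= EFinD.
Qed.

Lemma integrableB_EFin (f g : X -> R) :
  integrable f -> integrable g -> integrable (fun y => f y - g y).
Proof.
by move=> hf hg; apply: eq_integrable (integrableB _ hf hg) => // y _; rewrite /= EFinB.
Qed.

Lemma integrableZl_EFin (c : R) (f : X -> R) :
  integrable f -> integrable (fun y => c * f y).
Proof.
by move=> hf; apply: eq_integrable (integrableZl _ c hf) => // y _; rewrite /= EFinM.
Qed.

Lemma le_integrable_EFin (f g : X -> R) : measurable_fun setT f ->
  (forall y, `|f y| <= `|g y|) -> integrable g -> integrable f.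
Proof.
move=> mf fg hg; apply: le_integrable hg => //; first exact/measurable_EFinP.
by move=> y _; rewrite /comp !abse_EFin lee_fin.
Qed.

End IntegrableReal.

Section ComplexL2.
Context {d : measure_display} {X : measurableType d} {R : realType}.
Variable mu : {measure set X -> \bar R}.
Implicit Types (f g : X -> R[i]) (A : set X).

Lemma measurable_cabs f : cmeasurable f -> measurable_fun setT (fun x => cabs (f x)).
Proof.
case=> mr mi; apply: measurableT_comp (continuous_measurable_fun (@sqrt_continuous R)) _.
by apply: measurable_funD; apply: measurable_funX.
Qed.

Lemma cmeasurableB f g : cmeasurable f -> cmeasurable g ->
  cmeasurable (fun x => f x - g x).
Proof.
case=> mrf mif [mrg mig]; split.
- under eq_fun do rewrite ReB; exact: measurable_funB.
- under eq_fun do rewrite ImB; exact: measurable_funB.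
Qed.

Lemma cmeasurableM f g : cmeasurable f -> cmeasurable g ->
  cmeasurable (fun x => f x * g x).
Proof.
case=> mrf mif [mrg mig]; split.
- have -> : (fun x => complex.Re (f x * g x)) =
      (fun x => complex.Re (f x) * complex.Re (g x) - complex.Im (f x) * complex.Im (g x)).
    by apply/funext => x; case: (f x); case: (g x).
  by apply: measurable_funB; apply: measurable_funM.
- have -> : (fun x => complex.Im (f x * g x)) =
      (fun x => complex.Re (f x) * complex.Im (g x) + complex.Im (f x) * complex.Re (g x)).
    by apply/funext => x; case: (f x); case: (g x).
  by apply: measurable_funD; apply: measurable_funM.
Qed.

Lemma cmeasurable_mulind A f : measurable A -> cmeasurable f ->
  cmeasurable (mulind A f).
Proof.
move=> mA mf; apply: cmeasurableM => //; split; first exact: measurable_indic.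
exact: measurable_cst.
Qed.

Lemma mulind_in A f x : A x -> mulind A f x = f x.
Proof. by move=> Ax; rewrite /mulind indicE mem_set // mul1r. Qed.

Lemma mulind_out A f x : ~ A x -> mulind A f x = 0.
Proof. by move=> Ax; rewrite /mulind indicE memNset // mul0r. Qed.

Lemma cabs_mulind A f x : cabs (mulind A f x) = \1_A x * cabs (f x).
Proof. by rewrite /mulind cabsM cabs_real ger0_norm. Qed.

Lemma le_L2norm_sum3 (h a b c : X -> R[i]) : cmeasurable h -> cmeasurable a ->
  cmeasurable b -> cmeasurable c ->
  (forall x, cabs (h x) <= cabs (a x) + cabs (b x) + cabs (c x)) ->
  (L2norm mu h <= L2norm mu a + L2norm mu b + L2norm mu c)%E.
Proof.
move=> mh ma mb mc hb; apply: le_Lnorm_sum3; rewrite ?ler1n //; try exact: measurable_cabs.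
by move=> x; rewrite !ger0_norm ?cabs_ge0.
Qed.

Lemma le_L2norm_mulind A f : measurable A -> cmeasurable f ->
  (L2norm mu (mulind A f) <= L2norm mu f)%E.
Proof.
move=> mA mf; apply: le_Lnorm; rewrite ?ltr0n //.
- exact/measurable_cabs/cmeasurable_mulind.
- exact: measurable_cabs.
move=> x; rewrite cabs_mulind !ger0_norm ?mulr_ge0 ?cabs_ge0 //.
by rewrite ler_piMl ?cabs_ge0 // indicE; case: (_ \in _).
Qed.

Lemma inL2_mulind A f : measurable A -> inL2 mu f -> inL2 mu (mulind A f).
Proof.
move=> mA [mf ff]; split; first exact: cmeasurable_mulind.
exact: le_lt_trans (le_L2norm_mulind mA mf) ff.
Qed.

Lemma integrable_cabs_sqr g : inL2 mu g ->
  mu.-integrable setT (fun y => (cabs (g y) `^ 2)%:E).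
Proof.
case=> mg; rewrite /L2norm LnormE => fin.
apply/integrableP; split.
  apply/measurable_EFinP.
  exact: measurableT_comp (measurable_powR 2) (measurable_cabs mg).
under eq_integral => y _ do rewrite gee0_abs ?lee_fin ?powR_ge0 //.
move: fin; under eq_integral => y _ do rewrite ger0_norm ?cabs_ge0 //.
by apply: lty_poweRy; rewrite invr_neq0.
Qed.

End ComplexL2.

Section MetricMeasurable.
Context {R : realType} {d : measure_display} {X : measurableType d}.
Variable dist : X -> X -> R.
Hypothesis dist_metric : is_metric dist.
Hypothesis borel : borel_structure dist.

Definition dcontinuous (phi : X -> R) : Prop :=
  forall x e, 0 < e -> exists2 del, 0 < del &
    forall y, dist x y < del -> `|phi x - phi y| < e.

Lemma dist_sym x y : dist x y = dist y x.
Proof. by case: dist_metric. Qed.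

Lemma dist_tri x y z : dist x z <= dist x y + dist y z.
Proof. by case: dist_metric. Qed.

Lemma dist_xx x : dist x x = 0.
Proof. by case: dist_metric => _ H _ _; apply/H. Qed.

Lemma measurable_dopen (U : set X) : dopen dist U -> measurable U.
Proof. by move=> oU; rewrite borel; apply: sub_sigma_algebra. Qed.

Lemma measurable_cball x r : measurable (cball dist x r).
Proof.
rewrite -[cball _ _ _]setCK; apply/measurableC/measurable_dopen.
move=> y /= /negP; rewrite -ltNge => ry.
exists (dist x y - r); first by rewrite subr_gt0.
move=> z /= yz; apply/negP; rewrite -ltNge.
have := dist_tri x z y; rewrite (dist_sym z y); lra.
Qed.

Lemma measurable_fun_dcontinuous (phi : X -> R) :
  dcontinuous phi -> measurable_fun setT phi.
Proof.
move=> phic; apply: (@measurability _ _ X _ setT phi (@RGenOInfty.G R)).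
  exact: RGenOInfty.measurableE.
move=> _ [_ [a ->] <-]; rewrite setTI; apply: measurable_dopen.
move=> x /=; rewrite in_itv /= andbT => ax.
have ax0 : 0 < phi x - a by rewrite subr_gt0.
have [del del0 hd] := phic x _ ax0.
exists del => // y /= /hd; rewrite in_itv /= andbT => h.
have := ler_norm (phi x - phi y); lra.
Qed.

Lemma r_interior_dist F r x y : r_interior dist F r x -> ~ F y -> r < dist x y.
Proof.
move=> xF yF; rewrite -lte_fin; apply: lt_le_trans xF _.
by apply: ereal_inf_lbound; exists y.
Qed.

Lemma dopen_r_interior F r : dopen dist (r_interior dist F r).
Proof.
move=> x; rewrite /r_interior /= => xF.
set m := ereal_inf _ in xF.
(* x |-> d(x, X \ F) is 1-Lipschitz, in extended-real form. *)
have lipschitz x' : (m - (dist x x')%:E <= ereal_inf [set (dist x' y)%:E | y in ~` F])%E.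
  apply: le_ereal_inf_tmp => _ [y yF <-].
  rewrite leeBlDr // -EFinD.
  apply: le_trans (ereal_inf_lbound _) _; first by exists y.
  by rewrite lee_fin addrC dist_tri.
move: xF lipschitz; case: m => [m0| |] // xF lipschitz.
- exists (m0 - r); first by rewrite subr_gt0 -lte_fin.
  move=> x' /= hx; apply: lt_le_trans (lipschitz x').
  by rewrite -EFinB lte_fin; rewrite lte_fin in xF; lra.
- by exists 1 => // x' _ /=; apply: lt_le_trans (lipschitz x'); rewrite /= ltry.
Qed.

Lemma measurable_r_interior F r : measurable (r_interior dist F r).
Proof. exact/measurable_dopen/dopen_r_interior. Qed.

End MetricMeasurable.

Section KernelLocality.
Context {R : realType} {d : measure_display} {X : measurableType d}.
Variables (dist : X -> X -> R) (mu : {measure set X -> \bar R}).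
Variables (k : X -> X -> R[i]) (r : R).
Hypothesis dist_metric : is_metric dist.
Hypothesis k_controlled : forall x y, r < dist x y -> k x y = 0.

Lemma Op_mulind_r_interior F f x :
  r_interior dist F r x -> Op mu k (mulind F f) x = Op mu k f x.
Proof.
move=> xF; rewrite /Op; congr (cintegral mu _); apply/funext => y.
have [Fy|Fy] := pselect (F y); first by rewrite mulind_in.
by rewrite k_controlled ?mul0r //; exact: r_interior_dist Fy.
Qed.

Lemma Op_mulind_r_interior_out F f x :
  ~ F x -> Op mu k (mulind (r_interior dist F r) f) x = 0.
Proof.
move=> Fx; rewrite /Op (_ : (fun y => _) = fun=> 0); last first.
  apply/funext => y; have [Gy|Gy] := pselect (r_interior dist F r y).
    by rewrite k_controlled ?mul0r // (dist_sym dist_metric); exact: r_interior_dist Fx.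
  by rewrite mulind_out // mulr0.
by rewrite /cintegral /Rintegral /= integral0.
Qed.

End KernelLocality.

Section KernelIntegral.
Context {R : realType} {d : measure_display} {X : measurableType d}.
Variables (dist : X -> X -> R) (mu : {measure set X -> \bar R}).
Hypothesis dist_metric : is_metric dist.
Hypothesis borel : borel_structure dist.
Hypothesis ball_bounded : forall r : R, 0 < r ->
  exists M : R, forall x : X, (mu (cball dist x r) <= M%:E)%E.

Lemma good_kernel_controlled k : good_kernel dist k ->
  exists2 r : R, 0 < r & forall x y, r < dist x y -> k x y = 0.
Proof.
case=> _ _ [r hr]; exists (`|r| + 1) => [|x y rxy]; first by rewrite ltr_pwDr.
by apply: hr; have := ler_norm r; lra.
Qed.

Lemma cmeasurable_kernel_row k x : good_kernel dist k -> cmeasurable (k x).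
Proof.
case=> _ kuc _; split; apply: (measurable_fun_dcontinuous borel) => y e e0;
  have [del del0 hd] := kuc e e0; exists del => // y' yy';
  have := hd x y x y'; rewrite dist_xx // => /(_ del0 yy') h.
- by rewrite -ReB; apply: le_lt_trans h; exact: Re_le_cabs.
- by rewrite -ImB; apply: le_lt_trans h; exact: Im_le_cabs.
Qed.

Lemma integrable_indic_cball x r : 0 < r ->
  mu.-integrable setT (fun y => (\1_(cball dist x r) y)%:E).
Proof.
move=> r0; have [M hM] := ball_bounded r0.
have mB := measurable_cball dist_metric borel x r.
apply/integrableP; split; first exact/measurable_EFinP/measurable_indic.
under eq_integral => y _ do rewrite gee0_abs ?lee_fin //.
by rewrite integral_indic // setIT (le_lt_trans (hM x)) ?ltry.
Qed.

Section Majorant.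
Variables (k : X -> X -> R[i]) (g : X -> R[i]) (r : R).
Hypothesis k_good : good_kernel dist k.
Hypothesis r_gt0 : 0 < r.
Hypothesis k_controlled : forall x y, r < dist x y -> k x y = 0.
Hypothesis g_L2 : inL2 mu g.

(* An integrable majorant of |g| on B_x(r + 1), the region outside of which
   k(x', .) vanishes for all x' within distance 1 of x. *)
Let majorant x y := \1_(cball dist x (r + 1)) y + cabs (g y) `^ 2.

Let majorant_ge0 x y : 0 <= majorant x y.
Proof. by rewrite addr_ge0 ?powR_ge0. Qed.

Let le_majorant x y : cball dist x (r + 1) y -> cabs (g y) <= majorant x y.
Proof.
move=> xy; rewrite /majorant indicE mem_set // powR_mulrn ?cabs_ge0 //.
by have := cabs_ge0 (g y); rewrite /=; nra.
Qed.

Let integrable_majorant x : mu.-integrable setT (EFin \o majorant x).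
Proof.
apply: integrableD_EFin; last exact: integrable_cabs_sqr.
exact/integrable_indic_cball/addr_gt0.
Qed.

Let kernel_out x x' y : dist x x' < 1 -> ~ cball dist x (r + 1) y -> k x' y = 0.
Proof.
move=> xx' /negP; rewrite /cball /= -ltNge => xy; apply: k_controlled.
have := dist_tri dist_metric x x' y; lra.
Qed.

Variable P : R[i] -> R.
Hypothesis PB : forall z w, P (z - w) = P z - P w.
Hypothesis P_le_cabs : forall z, `|P z| <= cabs z.
Hypothesis P_measurable : forall f : X -> R[i], cmeasurable f ->
  measurable_fun setT (fun x => P (f x)).

Lemma integrable_kernel_integrand x :
  mu.-integrable setT (EFin \o (fun y => P (k x y * g y))).
Proof.
have [[M kM] _ _] := k_good.
have M0 : 0 <= M by exact: le_trans (cabs_ge0 _) (kM x x).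
apply: (@le_integrable_EFin _ _ _ _ _ (fun y => M * majorant x y)).
- exact/P_measurable/cmeasurableM/g_L2.1/cmeasurable_kernel_row.
- move=> y; rewrite [leRHS]ger0_norm ?mulr_ge0 //.
  apply: le_trans (P_le_cabs _) _; rewrite cabsM.
  have [xy|xy] := pselect (cball dist x (r + 1) y).
    by rewrite ler_pM ?cabs_ge0 ?le_majorant.
  by rewrite (kernel_out _ xy) ?dist_xx // cabs0 mul0r mulr_ge0.
- exact: integrableZl_EFin.
Qed.

Lemma dcontinuous_kernel_integral :
  dcontinuous dist (fun x => Rintegral mu setT (fun y => P (k x y * g y))).
Proof.
move=> x eps eps0; have [_ kuc _] := k_good.
pose C := Rintegral mu setT (majorant x).
have C0 : 0 <= C by apply: Rintegral_ge0 => y _; exact: majorant_ge0.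
have C1 : 0 < C + 1 by rewrite ltr_pwDr.
have e0 : 0 < eps / (C + 1) by rewrite divr_gt0.
have [del del0 hd] := kuc _ e0.
exists (Num.min del 1) => [|x']; first by rewrite lt_min del0 ltr01.
rewrite lt_min => /andP[xx'del xx'1].
have diff_le y : `|P (k x y * g y) - P (k x' y * g y)| <= eps / (C + 1) * majorant x y.
  rewrite -PB -mulrBl; apply: le_trans (P_le_cabs _) _; rewrite cabsM.
  have [xy|xy] := pselect (cball dist x (r + 1) y).
    by rewrite ler_pM ?cabs_ge0 ?le_majorant // ltW // hd // dist_xx.
  rewrite (kernel_out _ xy) ?dist_xx // (kernel_out _ xy) //.
  by rewrite subrr cabs0 mul0r mulr_ge0 ?majorant_ge0 // ltW.
have int_diff := integrableB_EFin (integrable_kernel_integrand x) (integrable_kernel_integrand x').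
rewrite -RintegralB ?integrable_kernel_integrand //.
apply: le_lt_trans (le_normr_Rintegral _ int_diff) _ => //.
apply: le_lt_trans (@le_Rintegral _ _ _ _ _ _ (fun y => eps / (C + 1) * majorant x y) _ _ _ _) _.
- exact: measurableT.
- exact/integrable_norm.
- exact/integrableZl_EFin/integrable_majorant.
- by move=> y _; exact: diff_le.
rewrite RintegralZl ?integrable_majorant // -/C mulrAC ltr_pdivrMr //.
by rewrite mulrDr mulr1 ltrDl.
Qed.

End Majorant.

Lemma cmeasurable_Op k g : good_kernel dist k -> inL2 mu g -> cmeasurable (Op mu k g).
Proof.
move=> hk hg; have [r r0 hr] := good_kernel_controlled hk.
split; apply: (measurable_fun_dcontinuous borel).
- exact (dcontinuous_kernel_integral hk r0 hr hg
    (@ReB R) (@Re_le_cabs R) (fun f mf => mf.1)).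
- exact (dcontinuous_kernel_integral hk r0 hr hg
    (@ImB R) (@Im_le_cabs R) (fun f mf => mf.2)).
Qed.

End KernelIntegral.

Lemma ereal_inf_le_approx {R : realType} (I : Type) (P : set I) (u v : I -> \bar R) :
  (forall i e, P i -> 0 < e -> exists2 j, P j & (u j <= v i + e%:E)%E) ->
  (ereal_inf (u @` P) <= ereal_inf (v @` P))%E.
Proof.
move=> uv; apply: le_ereal_inf_tmp => _ [i Pi <-]; apply/lee_addgt0Pr => e e0.
have [j Pj uj] := uv i e Pi e0.
by apply: le_trans uj; apply: ereal_inf_lbound; exists j.
Qed.

Section CoarseLocality.
Context {R : realType} {d : measure_display} {X : measurableType d}.
Variables (dist : X -> X -> R) (mu : {measure set X -> \bar R}).
Hypothesis dist_metric : is_metric dist.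
Hypothesis borel : borel_structure dist.
Hypothesis ball_bounded : forall r : R, 0 < r ->
  exists M : R, forall x : X, (mu (cball dist x r) <= M%:E)%E.
Variable T : (X -> R[i]) -> (X -> R[i]).
Hypothesis T_EX : in_EX dist mu T.
Variable xi : set (set X).
Hypothesis xi_coarse : coarse_filter dist xi.

Local Notation unit_ball := [set f | inL2 mu f /\ (L2norm mu f <= 1)%E].

Lemma unit_ball_mulind A f : measurable A -> unit_ball f -> unit_ball (mulind A f).
Proof.
move=> mA [hf nf]; split; first exact: inL2_mulind.
by apply: le_trans nf; apply: le_L2norm_mulind; last exact: hf.1.
Qed.

Lemma le_opnorm S f : unit_ball f -> (L2norm mu (S f) <= opnorm mu S)%E.
Proof. by move=> hf; apply: ereal_sup_ubound; exists f. Qed.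

Lemma in_EX_controlled_approx e : 0 < e -> exists k (r : R),
  [/\ good_kernel dist k, 0 < r, (forall x y, r < dist x y -> k x y = 0) &
      (opnorm mu (fun f x => (T f x - Op mu k f x)%R) <= e%:E)%E].
Proof.
move=> e0; have [k [hk hn]] := T_EX.2 e e0.
by have [r r0 hr] := good_kernel_controlled hk; exists k, r.
Qed.

Lemma r_interior_filter F r : xi F -> 0 < r ->
  xi (r_interior dist F r) /\ measurable (r_interior dist F r).
Proof.
move=> xF r0; split; first exact: xi_coarse.2.
exact: measurable_r_interior.
Qed.

Lemma opnorm_mulind_T_approx F e : xi F /\ measurable F -> 0 < e ->
  exists2 G, xi G /\ measurable G &
  (opnorm mu (fun f => mulind G (T f)) <= opnorm mu (fun f => T (mulind F f)) + e%:E)%E.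
Proof.
move=> [xF mF] e0; have e20 : 0 < e / 2 by rewrite divr_gt0.
have [k [r [hk r0 hr hn]]] := in_EX_controlled_approx e20.
have [xG mG] := r_interior_filter xF r0.
exists (r_interior dist F r) => //.
apply: ge_ereal_sup => _ [f hf <-].
have hg := unit_ball_mulind mF hf.
have mTf := (T_EX.1 _ hf.1).1; have mTg := (T_EX.1 _ hg.1).1.
have mOpf := cmeasurable_Op dist_metric borel ball_bounded hk hf.1.
have mOpg := cmeasurable_Op dist_metric borel ball_bounded hk hg.1.
rewrite (splitr e) EFinD addeA.
apply: le_trans (@le_L2norm_sum3 _ _ _ mu _ (T (mulind F f))
  (fun x => T f x - Op mu k f x)
  (fun x => T (mulind F f) x - Op mu k (mulind F f) x) _ _ _ _ _) _.
- exact: cmeasurable_mulind.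
- exact: mTg.
- exact: cmeasurableB.
- exact: cmeasurableB.
- move=> x; have [Gx|Gx] := pselect (r_interior dist F r x); last first.
    by rewrite mulind_out // cabs0 !addr_ge0 ?cabs_ge0.
  rewrite mulind_in // (Op_mulind_r_interior mu hr) //.
  exact: ler_cabs_detour.
apply: leeD; first apply: leeD.
- exact: (le_opnorm _ hf).
- exact: le_trans (le_opnorm _ hf) hn.
- exact: le_trans (le_opnorm _ hg) hn.
Qed.

Lemma opnorm_T_mulind_approx F e : xi F /\ measurable F -> 0 < e ->
  exists2 G, xi G /\ measurable G &
  (opnorm mu (fun f => T (mulind G f)) <= opnorm mu (fun f => mulind F (T f)) + e%:E)%E.
Proof.
move=> [xF mF] e0; have e20 : 0 < e / 2 by rewrite divr_gt0.
have [k [r [hk r0 hr hn]]] := in_EX_controlled_approx e20.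
have [xG mG] := r_interior_filter xF r0.
exists (r_interior dist F r) => //.
apply: ge_ereal_sup => _ [f hf <-].
have hg := unit_ball_mulind mG hf.
have mTg := (T_EX.1 _ hg.1).1.
have mOpg := cmeasurable_Op dist_metric borel ball_bounded hk hg.1.
rewrite (splitr e) EFinD addeA.
apply: le_trans (@le_L2norm_sum3 _ _ _ mu _ (mulind F (T (mulind (r_interior dist F r) f)))
  (fun x => T (mulind (r_interior dist F r) f) x - Op mu k (mulind (r_interior dist F r) f) x)
  (fun x => T (mulind (r_interior dist F r) f) x - Op mu k (mulind (r_interior dist F r) f) x)
  _ _ _ _ _) _.
- exact: mTg.
- exact: cmeasurable_mulind.
- exact: cmeasurableB.
- exact: cmeasurableB.
- move=> x; have [Fx|Fx] := pselect (F x).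
    by rewrite mulind_in // -addrA lerDl addr_ge0 ?cabs_ge0.
  rewrite mulind_out // (Op_mulind_r_interior_out mu dist_metric hr) // subr0 cabs0.
  by rewrite add0r lerDl cabs_ge0.
apply: leeD; first apply: leeD.
- exact: (le_opnorm _ hg).
- exact: le_trans (le_opnorm _ hg) hn.
- exact: le_trans (le_opnorm _ hg) hn.
Qed.

End CoarseLocality.

Theorem lemma5p1 (R : realType) (d : measure_display) (X : measurableType d)
  (dist : X -> X -> R) (mu : {measure set X -> \bar R})
  (Hmetric : is_metric dist)
  (Hborel : borel_structure dist)
  (Hproper : proper_space dist)
  (Hnoncompact : ~ dcompact dist setT)
  (Hradon : radon dist mu)
  (Hsupp : full_support dist mu)
  (Hball_pos : forall (x : X) (r : R), 0 < r -> (0 < mu (cball dist x r))%E)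
  (Hball_bd : forall r : R, 0 < r ->
     exists M : R, forall x : X, (mu (cball dist x r) <= M%:E)%E)
  (T : (X -> R[i]) -> (X -> R[i])) (HT : in_EX dist mu T)
  (xi : set (set X)) (Hxi : coarse_filter dist xi) :
  ereal_inf [set opnorm mu (fun f => mulind F (T f)) | F in [set F | xi F /\ measurable F]]
  = ereal_inf [set opnorm mu (fun f => T (mulind F f)) | F in [set F | xi F /\ measurable F]].
Proof.
apply/eqP; rewrite eq_le; apply/andP; split;
  apply: ereal_inf_le_approx => F e xF e0.
- exact: (opnorm_mulind_T_approx Hmetric Hborel Hball_bd HT Hxi xF e0).
- exact: (opnorm_T_mulind_approx Hmetric Hborel Hball_bd HT Hxi xF e0).
Qed.
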